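(* Let $H$ be a $k$-linear semi-Hopf category, $A$ a right $H$-comodule category and $B=A^{{\rm co}H}$. For a descent datum $(M,\sigma)\in\underline{\rm Desc}_B(A)$ define $\rho_{xy}:M_{xy}\to M_{xy}\otimes H_{xy}$ by $\rho_{xy}(m)=m_{<0>}m_{<1>[0]}\otimes m_{<1>[1]}$. Then $(M,\rho)$ is a right relative $(A,H)$-Hopf module, every morphism of descent data is a morphism of relative Hopf modules, and so $P(M,\sigma)=(M,\rho)$, $P(f)=f$ defines a functor $P:\underline{\rm Desc}_B(A)\to\mathcal{M}_k(X)^H_A$. If moreover $H$ is a Hopf category and $A$ is an $H$-Galois category extension of $B$, then $P$ is an isomorphism of categories.
   Context: Let $k$ be a commutative ring; unadorned $\otimes$ is over $k$. A $k$-linear category $A$ with class of objects $X$ consists of $k$-modules $A_{xy}$, associative compositions $A_{xy}\otimes A_{yz}\to A_{xz}$, $a\otimes b\mapsto ab$, and units $1_x\in A_{xx}$. A right $A$-module is a family $(M_{xy})$ with maps $M_{xy}\otimes A_{yz}\to M_{xz}$, $m\otimes a\mapsto ma$, associative and unital. A $k$-linear semi-Hopf category $H$ (objects $X$) is a $k$-linear category in which each $H_{xy}$ is a $k$-coalgebra with $\Delta_{xy}(h)=h_{(1)}\otimes h_{(2)}$ and counit $\varepsilon_{xy}$, such that $\Delta_{xz}(hh')=h_{(1)}h'_{(1)}\otimes h_{(2)}h'_{(2)}$, $\Delta_{xx}(1_x)=1_x\otimes1_x$, $\varepsilon_{xz}(hh')=\varepsilon_{xy}(h)\varepsilon_{yz}(h')$,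 $\varepsilon_{xx}(1_x)=1$. It is a Hopf category if there are $k$-linear maps $S_{xy}:H_{xy}\to H_{yx}$ with $h_{(1)}S_{xy}(h_{(2)})=\varepsilon_{xy}(h)1_x$ and $S_{xy}(h_{(1)})h_{(2)}=\varepsilon_{xy}(h)1_y$. A right $H$-comodule category is a $k$-linear category $A$ with objects $X$ such that each $A_{xy}$ is a right $H_{xy}$-comodule, $\rho_{xy}(a)=a_{[0]}\otimes a_{[1]}$, with $\rho_{xz}(ab)=a_{[0]}b_{[0]}\otimes a_{[1]}b_{[1]}$ and $\rho_{xx}(1_x)=1_x\otimes1_x$. Its coinvariants are the $k$-algebras $B_x=\{a\in A_{xx}\mid\rho_{xx}(a)=a\otimes1_x\}$; $A_{xy}$ is a $B_x$-$B_y$-bimodule by multiplication. $A$ is an $H$-Galois category extension of $B$ if all maps ${\rm can}^z_{xy}:A_{zx}\otimes_{B_x}A_{xy}\to A_{zy}\otimes H_{xy}$, $a\otimes_{B_x}a'\mapsto aa'_{[0]}\otimes a'_{[1]}$, are bijective. A right relative $(A,H)$-Hopf module is a right $A$-module $M$ such that each $M_{xy}$ is a right $H_{xy}$-comodule with $\rho_{xz}(ma)=m_{[0]}a_{[0]}\otimes m_{[1]}a_{[1]}$; morphisms are $A$-linear maps with $H_{xy}$-colinear components; the category is $\mathcal{M}_k(X)^H_A$. A descent datum $(M,\sigma)$ is a right $A$-module $M$ with $k$-linear maps $\sigma_{xy}:M_{xy}\to M_{xx}\otimes_{B_x}A_{xy}$, $\sigma_{xy}(m)=m_{<0>}\otimes_{B_x}m_{<1>}$,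 such that for all $m\in M_{xy}$, $a\in A_{yz}$: (i) $\sigma_{xz}(ma)=m_{<0>}\otimes_{B_x}m_{<1>}a$; (ii) $\sigma_{xx}(m_{<0>})\otimes_{B_x}m_{<1>}=m_{<0>}\otimes_{B_x}1_x\otimes_{B_x}m_{<1>}$; (iii) $m_{<0>}m_{<1>}=m$. A morphism of descent data is a morphism $f$ of right $A$-modules with $f_{xx}(m_{<0>})\otimes_{B_x}m_{<1>}=\sigma'_{xy}(f_{xy}(m))$. $\underline{\rm Desc}_B(A)$ is the category of descent data. *)

From HB Require Import structures.
From mathcomp Require Import all_boot all_order all_algebra.
Set Implicit Arguments. Unset Strict Implicit. Unset Printing Implicit Defensive.
Import GRing.Theory.
Local Open Scope ring_scope.

(* Tensor products, presented as formal sums of pure tensors modulo the     *)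
(* congruence generated by the defining relations of the tensor product.    *)
(* An element of M (x)_B N is represented by a list [:: (m1,n1); ...] of    *)
(* pure tensors standing for m1 (x) n1 + ...; two lists represent the same  *)
(* element iff they are related by [fs_eq gen].                             *)

Section FormalSums.
Variable T : Type.
Variable gen : seq T -> seq T -> Prop.
(* smallest congruence on the free commutative monoid seq T containing gen *)
Inductive fs_eq : seq T -> seq T -> Prop :=
| fs_gen s t : gen s t -> fs_eq s t
| fs_refl s : fs_eq s s
| fs_sym s t : fs_eq s t -> fs_eq t s
| fs_trans s t u : fs_eq s t -> fs_eq t u -> fs_eq s u
| fs_cat s s' t t' : fs_eq s s' -> fs_eq t t' -> fs_eq (s ++ t) (s' ++ t')
| fs_swap s t : fs_eq (s ++ t) (t ++ s).
End FormalSums.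

Section Tensor2.
Variables (k : comPzRingType) (M N : lmodType k).
(* balancing over a set P of "scalars" b : B acting on the right of M and
   on the left of N *)
Variables (B : Type) (P : B -> Prop) (ract : M -> B -> M) (lact : B -> N -> N).
Inductive tens2_gen : seq (M * N) -> seq (M * N) -> Prop :=
| t2_addl m m' n : tens2_gen [:: (m + m', n)] [:: (m, n); (m', n)]
| t2_addr m n n' : tens2_gen [:: (m, n + n')] [:: (m, n); (m, n')]
| t2_zerol n : tens2_gen [:: (0, n)] [::]
| t2_zeror m : tens2_gen [:: (m, 0)] [::]
| t2_scal (c : k) m n : tens2_gen [:: (c *: m, n)] [:: (m, c *: n)]
| t2_bal b m n : P b -> tens2_gen [:: (ract m b, n)] [:: (m, lact b n)].
Definition tens2_eq := fs_eq tens2_gen.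
End Tensor2.

Definition tensk_eq (k : comPzRingType) (M N : lmodType k) :=
  @tens2_eq k M N unit (fun _ => False) (fun m _ => m) (fun _ n => n).

Section Tensor3.
Variables (k : comPzRingType) (M N Q : lmodType k).
Variables (B1 : Type) (P1 : B1 -> Prop) (ract1 : M -> B1 -> M) (lact1 : B1 -> N -> N).
Variables (B2 : Type) (P2 : B2 -> Prop) (ract2 : N -> B2 -> N) (lact2 : B2 -> Q -> Q).
(* M (x)_{B1} N (x)_{B2} Q, elements (m, (n, q)) standing for m (x) n (x) q *)
Inductive tens3_gen : seq (M * (N * Q)) -> seq (M * (N * Q)) -> Prop :=
| t3_add1 m m' n q : tens3_gen [:: (m + m', (n, q))] [:: (m, (n, q)); (m', (n, q))]
| t3_add2 m n n' q : tens3_gen [:: (m, (n + n', q))] [:: (m, (n, q)); (m, (n', q))]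
| t3_add3 m n q q' : tens3_gen [:: (m, (n, q + q'))] [:: (m, (n, q)); (m, (n, q'))]
| t3_zero1 n q : tens3_gen [:: (0, (n, q))] [::]
| t3_zero2 m q : tens3_gen [:: (m, (0, q))] [::]
| t3_zero3 m n : tens3_gen [:: (m, (n, 0))] [::]
| t3_scal12 (c : k) m n q : tens3_gen [:: (c *: m, (n, q))] [:: (m, (c *: n, q))]
| t3_scal23 (c : k) m n q : tens3_gen [:: (m, (c *: n, q))] [:: (m, (n, c *: q))]
| t3_bal12 b m n q : P1 b -> tens3_gen [:: (ract1 m b, (n, q))] [:: (m, (lact1 b n, q))]
| t3_bal23 b m n q : P2 b -> tens3_gen [:: (m, (ract2 n b, q))] [:: (m, (n, lact2 b q))].
Definition tens3_eq := fs_eq tens3_gen.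
End Tensor3.

Definition tens3k_eq (k : comPzRingType) (M N Q : lmodType k) :=
  @tens3_eq k M N Q unit (fun _ => False) (fun m _ => m) (fun _ n => n)
                    unit (fun _ => False) (fun n _ => n) (fun _ q => q).

Record klcat (k : comPzRingType) (X : Type) := KLCat {
  hom :> X -> X -> lmodType k;
  comp : forall x y z, hom x y -> hom y z -> hom x z;
  idm : forall x, hom x x;
  compDl : forall x y z (a a' : hom x y) (b : hom y z),
      comp (a + a') b = comp a b + comp a' b;
  compDr : forall x y z (a : hom x y) (b b' : hom y z),
      comp a (b + b') = comp a b + comp a b';
  compZl : forall x y z (c : k) (a : hom x y) (b : hom y z),
      comp (c *: a) b = c *: comp a b;
  compZr : forall x y z (c : k) (a : hom x y) (b : hom y z),
      comp a (c *: b) = c *: comp a b;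
  compA : forall x y z w (a : hom x y) (b : hom y z) (d : hom z w),
      comp a (comp b d) = comp (comp a b) d;
  comp1l : forall x y (a : hom x y), comp (idm x) a = a;
  comp1r : forall x y (a : hom x y), comp a (idm y) = a }.
Arguments comp {k X} _ {x y z}.
Arguments idm {k X} _ x.

Record rmod (k : comPzRingType) (X : Type) (A : klcat k X) := RMod {
  mobj :> X -> X -> lmodType k;
  act : forall x y z, mobj x y -> A y z -> mobj x z;
  actDl : forall x y z (m m' : mobj x y) (a : A y z), act (m + m') a = act m a + act m' a;
  actDr : forall x y z (m : mobj x y) (a a' : A y z), act m (a + a') = act m a + act m a';
  actZl : forall x y z (c : k) (m : mobj x y) (a : A y z), act (c *: m) a = c *: act m a;
  actZr : forall x y z (c : k) (m : mobj x y) (a : A y z), act m (c *: a) = c *: act m a;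
  actA : forall x y z w (m : mobj x y) (a : A y z) (b : A z w),
      act (act m a) b = act m (comp A a b);
  act1 : forall x y (m : mobj x y), act m (idm A y) = m }.
Arguments act {k X A} _ {x y z}.

Definition rmod_morph (k : comPzRingType) (X : Type) (A : klcat k X) (M M' : rmod A)
  (f : forall x y, M x y -> M' x y) : Prop :=
  [/\ forall x y (m m' : M x y), f x y (m + m') = f x y m + f x y m',
      forall x y (c : k) (m : M x y), f x y (c *: m) = c *: f x y m &
      forall x y z (m : M x y) (a : A y z), f x z (act M m a) = act M' (f x y m) a].

Definition is_klinear (k : comPzRingType) (V W : lmodType k) (f : V -> W) :=
  (forall v v', f (v + v') = f v + f v') /\ (forall (c : k) v, f (c *: v) = c *: f v).

(* a k-linear map into V (x) W, represented by a choice of representatives *)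
Definition is_klinear_tk (k : comPzRingType) (U V W : lmodType k)
  (f : U -> seq (V * W)) :=
  (forall u u', tensk_eq (f (u + u')) (f u ++ f u')) /\
  (forall (c : k) u, tensk_eq (f (c *: u)) [seq (c *: p.1, p.2) | p <- f u]).

Definition is_coalg (k : comPzRingType) (C : lmodType k)
  (Delta : C -> seq (C * C)) (eps : C -> k) : Prop :=
  [/\ is_klinear_tk Delta,
      (forall h h', eps (h + h') = eps h + eps h') /\
      (forall (c : k) h, eps (c *: h) = c * eps h),
      forall h, tens3k_eq [seq (q.1, (q.2, p.2)) | p <- Delta h, q <- Delta p.1]
                          [seq (p.1, (q.1, q.2)) | p <- Delta h, q <- Delta p.2],
      forall h, \sum_(p <- Delta h) eps p.1 *: p.2 = h &
      forall h, \sum_(p <- Delta h) eps p.2 *: p.1 = h].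

Definition is_comodule (k : comPzRingType) (C V : lmodType k)
  (Delta : C -> seq (C * C)) (eps : C -> k) (rho : V -> seq (V * C)) : Prop :=
  [/\ is_klinear_tk rho,
      forall v, tens3k_eq [seq (q.1, (q.2, p.2)) | p <- rho v, q <- rho p.1]
                          [seq (p.1, (q.1, q.2)) | p <- rho v, q <- Delta p.2] &
      forall v, \sum_(p <- rho v) eps p.2 *: p.1 = v].

Record semiHopf (k : comPzRingType) (X : Type) := SemiHopf {
  hcat :> klcat k X;
  Delta : forall x y, hcat x y -> seq (hcat x y * hcat x y);
  eps : forall x y, hcat x y -> k;
  coalgH : forall x y, is_coalg (@Delta x y) (@eps x y);
  Delta_comp : forall x y z (h : hcat x y) (h' : hcat y z),
      tensk_eq (Delta (comp hcat h h'))
               [seq (comp hcat p.1 q.1, comp hcat p.2 q.2) | p <- Delta h, q <- Delta h'];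
  Delta_id : forall x, tensk_eq (Delta (idm hcat x)) [:: (idm hcat x, idm hcat x)];
  eps_comp : forall x y z (h : hcat x y) (h' : hcat y z),
      eps (comp hcat h h') = eps h * eps h';
  eps_id : forall x, eps (idm hcat x) = 1 }.
Arguments Delta {k X} _ {x y}.
Arguments eps {k X} _ {x y}.

Definition is_antipode (k : comPzRingType) (X : Type) (H : semiHopf k X)
  (S : forall x y, H x y -> H y x) : Prop :=
  forall x y, [/\ is_klinear (S x y),
    forall h : H x y, \sum_(p <- Delta H h) comp H p.1 (S x y p.2) = eps H h *: idm H x &
    forall h : H x y, \sum_(p <- Delta H h) comp H (S x y p.1) p.2 = eps H h *: idm H y].

Definition is_hopf_cat (k : comPzRingType) (X : Type) (H : semiHopf k X) : Prop :=
  exists S : forall x y, H x y -> H y x, is_antipode S.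

Record comodcat (k : comPzRingType) (X : Type) (H : semiHopf k X) := ComodCat {
  ccat :> klcat k X;
  crho : forall x y, ccat x y -> seq (ccat x y * H x y);
  crho_comod : forall x y, is_comodule (Delta H (x:=x) (y:=y)) (eps H) (@crho x y);
  crho_comp : forall x y z (a : ccat x y) (b : ccat y z),
      tensk_eq (crho (comp ccat a b))
               [seq (comp ccat p.1 q.1, comp H p.2 q.2) | p <- crho a, q <- crho b];
  crho_id : forall x, tensk_eq (crho (idm ccat x)) [:: (idm ccat x, idm H x)] }.
Arguments crho {k X H} _ {x y}.

Section Comod.
Variables (k : comPzRingType) (X : Type) (H : semiHopf k X) (A : comodcat H).

Definition coinv (x : X) (b : A x x) : Prop :=
  tensk_eq (crho A b) [:: (b, idm H x)].

(* equality in A_zx (x)_{B_x} A_xy *)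
Definition tensBAA_eq (z x y : X) : seq (A z x * A x y) -> seq (A z x * A x y) -> Prop :=
  tens2_eq (coinv (x:=x)) (fun (a : A z x) (b : A x x) => comp A a b)
                          (fun (b : A x x) (a : A x y) => comp A b a).

Definition can_map (z x y : X) (s : seq (A z x * A x y)) : seq (A z y * H x y) :=
  [seq (comp A p.1 q.1, q.2) | p <- s, q <- crho A p.2].

Definition is_galois : Prop :=
  forall z x y,
    (forall s t : seq (A z x * A x y),
       tensk_eq (can_map s) (can_map t) -> tensBAA_eq s t) /\
    (forall u : seq (A z y * H x y), exists s, tensk_eq (can_map (x:=x) s) u).

Definition is_hopfmod (M : rmod A) (rho : forall x y, M x y -> seq (M x y * H x y)) :=
  (forall x y, is_comodule (Delta H (x:=x) (y:=y)) (eps H) (rho x y)) /\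
  (forall x y z (m : M x y) (a : A y z),
      tensk_eq (rho x z (act M m a))
               [seq (act M p.1 q.1, comp H p.2 q.2) | p <- rho x y m, q <- crho A a]).

Definition hopfmod_morph (M M' : rmod A)
  (rho : forall x y, M x y -> seq (M x y * H x y))
  (rho' : forall x y, M' x y -> seq (M' x y * H x y))
  (f : forall x y, M x y -> M' x y) : Prop :=
  rmod_morph f /\
  (forall x y (m : M x y), tensk_eq (rho' x y (f x y m)) [seq (f x y p.1, p.2) | p <- rho x y m]).

(* equality in M_xx (x)_{B_x} A_xy *)
Definition tensBMA_eq (M : rmod A) (x y : X) :
  seq (M x x * A x y) -> seq (M x x * A x y) -> Prop :=
  tens2_eq (coinv (x:=x)) (fun (m : M x x) (b : A x x) => act M m b)
                          (fun (b : A x x) (a : A x y) => comp A b a).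

(* equality in M_xx (x)_{B_x} A_xx (x)_{B_x} A_xy *)
Definition tensBMAA_eq (M : rmod A) (x y : X) :
  seq (M x x * (A x x * A x y)) -> seq (M x x * (A x x * A x y)) -> Prop :=
  tens3_eq (coinv (x:=x)) (fun (m : M x x) (b : A x x) => act M m b)
                          (fun (b : A x x) (a : A x x) => comp A b a)
           (coinv (x:=x)) (fun (a : A x x) (b : A x x) => comp A a b)
                          (fun (b : A x x) (a : A x y) => comp A b a).

Definition is_descent (M : rmod A) (sigma : forall x y, M x y -> seq (M x x * A x y)) :=
  [/\
      forall x y (m m' : M x y), tensBMA_eq (sigma x y (m + m')) (sigma x y m ++ sigma x y m'),
      forall x y (c : k) (m : M x y),
        tensBMA_eq (sigma x y (c *: m)) [seq (c *: p.1, p.2) | p <- sigma x y m],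
      (* (i) *)
      forall x y z (m : M x y) (a : A y z),
        tensBMA_eq (sigma x z (act M m a)) [seq (p.1, comp A p.2 a) | p <- sigma x y m],
      (* (ii) *)
      forall x y (m : M x y),
        tensBMAA_eq [seq (q.1, (q.2, p.2)) | p <- sigma x y m, q <- sigma x x p.1]
                    [seq (p.1, (idm A x, p.2)) | p <- sigma x y m] &
      (* (iii) *)
      forall x y (m : M x y), \sum_(p <- sigma x y m) act M p.1 p.2 = m].

Definition descent_morph (M M' : rmod A)
  (sigma : forall x y, M x y -> seq (M x x * A x y))
  (sigma' : forall x y, M' x y -> seq (M' x x * A x y))
  (f : forall x y, M x y -> M' x y) : Prop :=
  rmod_morph f /\
  (forall x y (m : M x y),
      tensBMA_eq (sigma' x y (f x y m)) [seq (f x x p.1, p.2) | p <- sigma x y m]).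

Definition rho_of (M : rmod A) (sigma : forall x y, M x y -> seq (M x x * A x y))
  : forall x y, M x y -> seq (M x y * H x y) :=
  fun x y m => [seq (act M p.1 q.1, q.2) | p <- sigma x y m, q <- crho A p.2].

End Comod.

From Pilot Require Import Defs.
From HB Require Import structures.
From mathcomp Require Import all_boot all_order all_algebra.
From Stdlib Require Import ClassicalEpsilon.
Import Defs.
Set Implicit Arguments. Unset Strict Implicit. Unset Printing Implicit Defensive.
Import GRing.Theory.
Local Open Scope ring_scope.

(* For a descent datum, rho is can_M o sigma, where can_M (m (x)_B a) = m a_[0] (x) a_[1].
   The descent conditions transported along can_M give the Hopf module axioms: (i) gives
   compatibility with the A-action, (iii) counitality, and (ii), pushed through
   m (x) a (x) a' |-> m a_[0] a'_[0] (x) a_[1] a'_[1] (x) a'_[2], coassociativity.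
   If A is Galois, the translation map gamma h = can^-1 (1 (x) h) yields an inverse
   m (x) h |-> m gamma(h) of can_M for every module M.  Hence P is injective on objects and
   full, and for a Hopf module sigma := can_M^-1 o rho is a descent datum; its condition (ii)
   reduces, by injectivity of can on the last two factors, to the identity
   gamma(h_(1)) (x) h_(2) = gamma(h)^1 (x) gamma(h)^2_[0] (x) gamma(h)^2_[1]
   in A (x)_B A (x) H, which follows by applying can to the first two factors. *)

(** * Formal sums and maps out of tensor products *)

Definition flatmap (T U : Type) (F : T -> seq U) (s : seq T) : seq U :=
  flatten (map F s).

Lemma flatmap_cat (T U : Type) (F : T -> seq U) s t :
  flatmap F (s ++ t) = flatmap F s ++ flatmap F t.
Proof. by rewrite /flatmap map_cat flatten_cat. Qed.

Lemma flatmap_cons (T U : Type) (F : T -> seq U) p s : flatmap F (p :: s) = F p ++ flatmap F s.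
Proof. by []. Qed.

Lemma flatmap1 (T U : Type) (F : T -> seq U) p : flatmap F [:: p] = F p.
Proof. by rewrite /flatmap /= cats0. Qed.

Lemma flatmapA (T U V : Type) (F : T -> seq U) (G : U -> seq V) s :
  flatmap G (flatmap F s) = flatmap (fun p => flatmap G (F p)) s.
Proof. by elim: s => //= p s IH; rewrite flatmap_cons flatmap_cat IH. Qed.

Lemma flatmap_map (T U V : Type) (f : T -> U) (G : U -> seq V) s :
  flatmap G (map f s) = flatmap (fun p => G (f p)) s.
Proof. by elim: s => //= p s IH; rewrite !flatmap_cons IH. Qed.

Lemma map_flatmap (T U V : Type) (F : T -> seq U) (g : U -> V) s :
  map g (flatmap F s) = flatmap (fun p => map g (F p)) s.
Proof. by elim: s => //= p s IH; rewrite !flatmap_cons map_cat IH. Qed.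

Lemma eq_flatmap (T U : Type) (F G : T -> seq U) s : F =1 G -> flatmap F s = flatmap G s.
Proof. by move=> FG; rewrite /flatmap (eq_map FG). Qed.

Lemma allpairs_flatmap (T U V : Type) (f : T -> U -> V) (t : T -> seq U) s :
  [seq f x y | x <- s, y <- t x] = flatmap (fun x => map (f x) (t x)) s.
Proof. by []. Qed.

Lemma flatmap_seq1 (T U : Type) (f : T -> U) s : flatmap (fun p => [:: f p]) s = map f s.
Proof. by elim: s => //= p s IH; rewrite flatmap_cons IH. Qed.

Lemma flatmap_seq1_id (T : Type) (s : seq T) : flatmap (fun p => [:: p]) s = s.
Proof. by rewrite flatmap_seq1 map_id. Qed.

Section FormalSumsTheory.
Context {T : Type} {gen : seq T -> seq T -> Prop}.
Local Notation E := (fs_eq gen).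

Lemma fs_catl s t t' : E t t' -> E (s ++ t) (s ++ t').
Proof. by move=> h; apply: fs_cat => //; apply: fs_refl. Qed.

Lemma fs_catr s s' t : E s s' -> E (s ++ t) (s' ++ t).
Proof. by move=> h; apply: fs_cat => //; apply: fs_refl. Qed.

Lemma fs_of_eq s t : s = t -> E s t.
Proof. by move->; apply: fs_refl. Qed.

Lemma fs_flatmap (U : Type) (F G : U -> seq T) s :
  (forall p, E (F p) (G p)) -> E (flatmap F s) (flatmap G s).
Proof.
move=> FG; elim: s => [|p s IH]; first exact: fs_refl.
by rewrite !flatmap_cons; apply: fs_cat.
Qed.

Lemma fs_flatmap_cat (U : Type) (F G : U -> seq T) s :
  E (flatmap (fun p => F p ++ G p) s) (flatmap F s ++ flatmap G s).
Proof.
elim: s => [|p s IH]; first exact: fs_refl.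
rewrite !flatmap_cons -!catA; apply: fs_catl.
apply: fs_trans (fs_catl _ IH) _; rewrite !catA; apply: fs_catr; exact: fs_swap.
Qed.

Lemma fs_flatmap_nil (U : Type) (F : U -> seq T) s :
  (forall p, E (F p) [::]) -> E (flatmap F s) [::].
Proof.
move=> F0; apply: (@fs_trans _ _ _ (flatmap (fun _ => [::]) s)); first exact: fs_flatmap.
by apply: fs_of_eq; elim: s.
Qed.

Lemma fs_flatmapC (U V : Type) (G : U -> V -> seq T) (s : seq U) (t : seq V) :
  E (flatmap (fun a => flatmap (G a) t) s) (flatmap (fun b => flatmap (G^~ b) s) t).
Proof.
elim: s => [|a s IH].
  by apply: fs_sym; apply: fs_flatmap_nil => b; apply: fs_refl.
rewrite flatmap_cons; apply: fs_trans (fs_catl _ IH) _.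
apply: fs_sym; exact: (fs_flatmap_cat (fun b => G a b) (fun b => flatmap (G^~ b) s)).
Qed.

Lemma fs_map_split (U : Type) (a b c : U -> T) s :
  (forall i, E [:: a i] [:: b i; c i]) -> E (map a s) (map b s ++ map c s).
Proof.
move=> h; rewrite -!flatmap_seq1; apply: fs_trans (fs_flatmap_cat _ _ s).
exact: fs_flatmap.
Qed.

Lemma fs_map_nil (U : Type) (a : U -> T) s :
  (forall i, E [:: a i] [::]) -> E (map a s) [::].
Proof. by move=> h; rewrite -flatmap_seq1; apply: fs_flatmap_nil. Qed.

Lemma fs_map (U : Type) (a b : U -> T) s :
  (forall i, E [:: a i] [:: b i]) -> E (map a s) (map b s).
Proof. by move=> h; rewrite -!flatmap_seq1; apply: fs_flatmap. Qed.

End FormalSumsTheory.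

Lemma fs_eq_flatmap (T U : Type) (gT : seq T -> seq T -> Prop)
    (gU : seq U -> seq U -> Prop) (F : T -> seq U) :
  (forall s t, gT s t -> fs_eq gU (flatmap F s) (flatmap F t)) ->
  forall s t, fs_eq gT s t -> fs_eq gU (flatmap F s) (flatmap F t).
Proof.
move=> hF s t; elim=> {s t}.
- by move=> s t /hF.
- by move=> s; apply: fs_refl.
- by move=> s t _; apply: fs_sym.
- by move=> s t u _ IH1 _; apply: fs_trans.
- by move=> s s' t t' _ IH1 _ IH2; rewrite !flatmap_cat; apply: fs_cat.
- by move=> s t; rewrite !flatmap_cat; apply: fs_swap.
Qed.

Lemma fs_eq_sum (T : Type) (V : nmodType) (gT : seq T -> seq T -> Prop) (e : T -> V) :
  (forall s t, gT s t -> \sum_(p <- s) e p = \sum_(p <- t) e p) ->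
  forall s t, fs_eq gT s t -> \sum_(p <- s) e p = \sum_(p <- t) e p.
Proof.
move=> he s t; elim=> {s t}.
- by move=> s t /he.
- by [].
- by move=> s t _ ->.
- by move=> s t u _ -> _ ->.
- by move=> s s' t t' _ h1 _ h2; rewrite !big_cat h1 h2.
- by move=> s t; rewrite !big_cat; apply: addrC.
Qed.

Section Tensor2Maps.
Variables (k : comPzRingType) (M N : lmodType k).
Variables (B : Type) (P : B -> Prop) (ract : M -> B -> M) (lact : B -> N -> N).
Variables (U : Type) (gU : seq U -> seq U -> Prop).
Local Notation E := (fs_eq gU).

Definition tens2_compat (F : M * N -> seq U) : Prop :=
  [/\ forall m m' n, E (F (m + m', n)) (F (m, n) ++ F (m', n)),
      forall m n n', E (F (m, n + n')) (F (m, n) ++ F (m, n')),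
      (forall n, E (F (0, n)) [::]) /\ (forall m, E (F (m, 0)) [::]),
      forall c m n, E (F (c *: m, n)) (F (m, c *: n)) &
      forall b m n, P b -> E (F (ract m b, n)) (F (m, lact b n))].

Lemma tens2_eq_flatmap F : tens2_compat F ->
  forall s t, tens2_eq P ract lact s t -> E (flatmap F s) (flatmap F t).
Proof.
case=> hDl hDr [h0l h0r] hZ hB; apply: fs_eq_flatmap => s t.
by case=> *; rewrite /flatmap /= ?cats0; auto.
Qed.

End Tensor2Maps.

Section Tensor3Maps.
Variables (k : comPzRingType) (M N Q : lmodType k).
Variables (B1 : Type) (P1 : B1 -> Prop) (ract1 : M -> B1 -> M) (lact1 : B1 -> N -> N).
Variables (B2 : Type) (P2 : B2 -> Prop) (ract2 : N -> B2 -> N) (lact2 : B2 -> Q -> Q).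
Variables (U : Type) (gU : seq U -> seq U -> Prop).
Local Notation E := (fs_eq gU).

Definition tens3_compat (F : M * (N * Q) -> seq U) : Prop :=
  [/\ [/\ forall m m' n q, E (F (m + m', (n, q))) (F (m, (n, q)) ++ F (m', (n, q))),
          forall m n n' q, E (F (m, (n + n', q))) (F (m, (n, q)) ++ F (m, (n', q))) &
          forall m n q q', E (F (m, (n, q + q'))) (F (m, (n, q)) ++ F (m, (n, q')))],
      [/\ forall n q, E (F (0, (n, q))) [::],
          forall m q, E (F (m, (0, q))) [::] &
          forall m n, E (F (m, (n, 0))) [::]],
      forall c m n q, E (F (c *: m, (n, q))) (F (m, (c *: n, q))),
      forall c m n q, E (F (m, (c *: n, q))) (F (m, (n, c *: q))) &
      (forall b m n q, P1 b -> E (F (ract1 m b, (n, q))) (F (m, (lact1 b n, q)))) /\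
      (forall b m n q, P2 b -> E (F (m, (ract2 n b, q))) (F (m, (n, lact2 b q))))].

Lemma tens3_eq_flatmap F : tens3_compat F -> forall s t,
  tens3_eq P1 ract1 lact1 P2 ract2 lact2 s t -> E (flatmap F s) (flatmap F t).
Proof.
case=> [[hD1 hD2 hD3] [h01 h02 h03] hZ12 hZ23 [hB12 hB23]].
apply: fs_eq_flatmap => s t.
by case=> *; rewrite /flatmap /= ?cats0; auto.
Qed.

End Tensor3Maps.

Section KTensors.
Variable k : comPzRingType.

Lemma tensk_addl (M N : lmodType k) (m m' : M) (n : N) :
  tensk_eq [:: (m + m', n)] [:: (m, n); (m', n)].
Proof. exact/fs_gen/t2_addl. Qed.

Lemma tensk_addr (M N : lmodType k) (m : M) (n n' : N) :
  tensk_eq [:: (m, n + n')] [:: (m, n); (m, n')].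
Proof. exact/fs_gen/t2_addr. Qed.

Lemma tensk_0l (M N : lmodType k) (n : N) : tensk_eq [:: ((0 : M), n)] [::].
Proof. exact/fs_gen/t2_zerol. Qed.

Lemma tensk_0r (M N : lmodType k) (m : M) : tensk_eq [:: (m, (0 : N))] [::].
Proof. exact/fs_gen/t2_zeror. Qed.

Lemma tensk_scale (M N : lmodType k) c (m : M) (n : N) :
  tensk_eq [:: (c *: m, n)] [:: (m, c *: n)].
Proof. exact/fs_gen/t2_scal. Qed.

Lemma klinear_id (V : lmodType k) : is_klinear (@id V).
Proof. by []. Qed.

Lemma klinearZ (V : lmodType k) c : is_klinear (fun v : V => c *: v).
Proof. by split=> [v v'|c' v]; rewrite ?scalerDr // !scalerA mulrC. Qed.

Lemma klinear0 (V W : lmodType k) (f : V -> W) : is_klinear f -> f 0 = 0.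
Proof. by case=> fD _; apply: (@addrI _ (f 0)); rewrite -fD !addr0. Qed.

Lemma klinear_sum (V W : lmodType k) (f : V -> W) I (r : seq I) (F : I -> V) :
  is_klinear f -> f (\sum_(i <- r) F i) = \sum_(i <- r) f (F i).
Proof.
move=> fL; elim: r => [|i r IH]; first by rewrite !big_nil (klinear0 fL).
by rewrite !big_cons (proj1 fL) IH.
Qed.

Lemma tensk_eq_sum (M N : lmodType k) (e : M -> N -> M) :
  (forall n, is_klinear (e^~ n)) ->
  (forall m n n', e m (n + n') = e m n + e m n') -> (forall m, e m 0 = 0) ->
  (forall c m n, e (c *: m) n = e m (c *: n)) ->
  forall s t : seq (M * N), tensk_eq s t ->
  \sum_(p <- s) e p.1 p.2 = \sum_(p <- t) e p.1 p.2.
Proof.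
move=> eL eD e0 eZ; apply: fs_eq_sum => s t.
case=> [m m' n|m n n'|n|m|c m n|b m n []]; rewrite ?big_cons ?big_nil /= ?addr0 //.
- by rewrite (proj1 (eL n)).
- by rewrite (klinear0 (eL n)).
Qed.

Lemma klinear_tk0 (U V W : lmodType k) (R : U -> seq (V * W)) :
  is_klinear_tk R -> tensk_eq (R 0) [::].
Proof.
case=> _ RZ; rewrite -(scale0r (0 : U)); apply: fs_trans (RZ 0 0) _.
by apply: fs_map_nil => p; rewrite scale0r; apply: tensk_0l.
Qed.

Lemma tensk_eq_lin_family (I : Type) (W : seq I) (M N M' N' : lmodType k)
    (f : I -> M -> M') (g : I -> N -> N') :
  (forall i, is_klinear (f i)) -> (forall i, is_klinear (g i)) ->
  forall s t, tensk_eq s t ->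
   tensk_eq (flatmap (fun p => [seq (f i p.1, g i p.2) | i <- W]) s)
            (flatmap (fun p => [seq (f i p.1, g i p.2) | i <- W]) t).
Proof.
move=> fL gL; apply: tens2_eq_flatmap; split.
- by move=> m m' n; apply: fs_map_split => i; rewrite (proj1 (fL i)); apply: tensk_addl.
- by move=> m n n'; apply: fs_map_split => i; rewrite (proj1 (gL i)); apply: tensk_addr.
- split=> m; apply: fs_map_nil => i.
    by rewrite (klinear0 (fL i)); apply: tensk_0l.
  by rewrite (klinear0 (gL i)); apply: tensk_0r.
- move=> c m n; apply: fs_map => i.
  by rewrite (proj2 (fL i)) (proj2 (gL i)); apply: tensk_scale.
- by [].
Qed.

Lemma tensk_eq_map (M N M' N' : lmodType k) (f : M -> M') (g : N -> N') :
  is_klinear f -> is_klinear g -> forall s t, tensk_eq s t ->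
  tensk_eq (map (fun p => (f p.1, g p.2)) s) (map (fun p => (f p.1, g p.2)) t).
Proof.
move=> fL gL s t st.
have := tensk_eq_lin_family [:: tt] (fun=> fL) (fun=> gL) st.
by rewrite !flatmap_seq1.
Qed.

Lemma tensk_eq_mapl (M N M' : lmodType k) (f : M -> M') :
  is_klinear f -> forall (s t : seq (M * N)), tensk_eq s t ->
  tensk_eq (map (fun p => (f p.1, p.2)) s) (map (fun p => (f p.1, p.2)) t).
Proof. by move=> fL; apply: (tensk_eq_map fL (@klinear_id N)). Qed.

End KTensors.

Section LinearCategories.
Variables (k : comPzRingType) (X : Type) (C : klcat k X) (M : rmod C).

Lemma comp_klinearl x y z (b : C y z) : is_klinear (fun a : C x y => comp C a b).
Proof. by split=> *; rewrite ?compDl ?compZl. Qed.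

Lemma comp_klinearr x y z (a : C x y) : is_klinear (fun b : C y z => comp C a b).
Proof. by split=> *; rewrite ?compDr ?compZr. Qed.

Lemma comp0l x y z (b : C y z) : comp C (0 : C x y) b = 0.
Proof. exact: klinear0 (@comp_klinearl x y z b). Qed.

Lemma comp0r x y z (a : C x y) : comp C a (0 : C y z) = 0.
Proof. exact: klinear0 (@comp_klinearr x y z a). Qed.

Lemma act_klinearl x y z (a : C y z) : is_klinear (fun m : M x y => act M m a).
Proof. by split=> *; rewrite ?actDl ?actZl. Qed.

Lemma act_klinearr x y z (m : M x y) : is_klinear (fun a : C y z => act M m a).
Proof. by split=> *; rewrite ?actDr ?actZr. Qed.

Lemma act0l x y z (a : C y z) : act M (0 : M x y) a = 0.
Proof. exact: klinear0 (@act_klinearl x y z a). Qed.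

Lemma act0r x y z (m : M x y) : act M m (0 : C y z) = 0.
Proof. exact: klinear0 (@act_klinearr x y z m). Qed.

Definition regular_rmod : rmod C :=
  @RMod k X C C (fun x y z a b => comp C a b) (@compDl _ _ C) (@compDr _ _ C)
    (@compZl _ _ C) (@compZr _ _ C)
    (fun x y z w a b d => esym (compA a b d)) (@comp1r _ _ C).

End LinearCategories.

Arguments act_klinearl {k X C M x y z} a.
Arguments act_klinearr {k X C M x y z} m.
Arguments comp_klinearl {k X C x y z} b.
Arguments comp_klinearr {k X C x y z} a.

Section Tensor3Generators.
Context {k : comPzRingType} {M N Q : lmodType k}.
Context {B1 : Type} {P1 : B1 -> Prop} {ract1 : M -> B1 -> M} {lact1 : B1 -> N -> N}.
Context {B2 : Type} {P2 : B2 -> Prop} {ract2 : N -> B2 -> N} {lact2 : B2 -> Q -> Q}.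
Local Notation T3 := (tens3_eq P1 ract1 lact1 P2 ract2 lact2).

Lemma tens3_add1 m m' n q : T3 [:: (m + m', (n, q))] [:: (m, (n, q)); (m', (n, q))].
Proof. exact/fs_gen/t3_add1. Qed.
Lemma tens3_add2 m n n' q : T3 [:: (m, (n + n', q))] [:: (m, (n, q)); (m, (n', q))].
Proof. exact/fs_gen/t3_add2. Qed.
Lemma tens3_add3 m n q q' : T3 [:: (m, (n, q + q'))] [:: (m, (n, q)); (m, (n, q'))].
Proof. exact/fs_gen/t3_add3. Qed.
Lemma tens3_01 n q : T3 [:: (0, (n, q))] [::].
Proof. exact/fs_gen/t3_zero1. Qed.
Lemma tens3_02 m q : T3 [:: (m, (0, q))] [::].
Proof. exact/fs_gen/t3_zero2. Qed.
Lemma tens3_03 m n : T3 [:: (m, (n, 0))] [::].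
Proof. exact/fs_gen/t3_zero3. Qed.
Lemma tens3_scale12 c m n q : T3 [:: (c *: m, (n, q))] [:: (m, (c *: n, q))].
Proof. exact/fs_gen/t3_scal12. Qed.
Lemma tens3_scale23 c m n q : T3 [:: (m, (c *: n, q))] [:: (m, (n, c *: q))].
Proof. exact/fs_gen/t3_scal23. Qed.
Lemma tens3_bal12 b m n q : P1 b -> T3 [:: (ract1 m b, (n, q))] [:: (m, (lact1 b n, q))].
Proof. by move=> hb; apply/fs_gen/t3_bal12. Qed.
Lemma tens3_bal23 b m n q : P2 b -> T3 [:: (m, (ract2 n b, q))] [:: (m, (n, lact2 b q))].
Proof. by move=> hb; apply/fs_gen/t3_bal23. Qed.

Lemma tensk_tens3_12 (I : Type) (V : seq I) (M0 N0 : lmodType k)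
    (f : I -> M0 -> M) (g : I -> N0 -> N) (c : I -> Q) :
  (forall i, is_klinear (f i)) -> (forall i, is_klinear (g i)) ->
  forall s t, tensk_eq s t ->
   T3 (flatmap (fun p => [seq (f i p.1, (g i p.2, c i)) | i <- V]) s)
      (flatmap (fun p => [seq (f i p.1, (g i p.2, c i)) | i <- V]) t).
Proof.
move=> fL gL; apply: tens2_eq_flatmap; split.
- by move=> m m' n; apply: fs_map_split => i; rewrite (proj1 (fL i)); apply: tens3_add1.
- by move=> m n n'; apply: fs_map_split => i; rewrite (proj1 (gL i)); apply: tens3_add2.
- split=> m; apply: fs_map_nil => i.
    by rewrite (klinear0 (fL i)); apply: tens3_01.
  by rewrite (klinear0 (gL i)); apply: tens3_02.
- move=> c' m n; apply: fs_map => i.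
  by rewrite (proj2 (fL i)) (proj2 (gL i)); apply: tens3_scale12.
- by [].
Qed.

Lemma tensk_tens3_23 (I : Type) (V : seq I) (N0 Q0 : lmodType k)
    (c : I -> M) (f : I -> N0 -> N) (g : I -> Q0 -> Q) :
  (forall i, is_klinear (f i)) -> (forall i, is_klinear (g i)) ->
  forall s t, tensk_eq s t ->
   T3 (flatmap (fun p => [seq (c i, (f i p.1, g i p.2)) | i <- V]) s)
      (flatmap (fun p => [seq (c i, (f i p.1, g i p.2)) | i <- V]) t).
Proof.
move=> fL gL; apply: tens2_eq_flatmap; split.
- by move=> m m' n; apply: fs_map_split => i; rewrite (proj1 (fL i)); apply: tens3_add2.
- by move=> m n n'; apply: fs_map_split => i; rewrite (proj1 (gL i)); apply: tens3_add3.
- split=> m; apply: fs_map_nil => i.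
    by rewrite (klinear0 (fL i)); apply: tens3_02.
  by rewrite (klinear0 (gL i)); apply: tens3_03.
- move=> c' m n; apply: fs_map => i.
  by rewrite (proj2 (fL i)) (proj2 (gL i)); apply: tens3_scale23.
- by [].
Qed.

Lemma tensk_tens3_pre (c : M) (s t : seq (N * Q)) : tensk_eq s t ->
  T3 (map (fun p => (c, p)) s) (map (fun p => (c, p)) t).
Proof.
move=> st; have := tensk_tens3_23 [:: tt] (fun=> c) (fun=> klinear_id N)
  (fun=> klinear_id Q) st.
by rewrite !flatmap_seq1; congr T3; apply: eq_map => -[].
Qed.

Lemma tensk_tens3_post (c : Q) (s t : seq (M * N)) : tensk_eq s t ->
  T3 (map (fun p => (p.1, (p.2, c))) s) (map (fun p => (p.1, (p.2, c))) t).
Proof.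
move=> st; have := tensk_tens3_12 [:: tt] (fun=> c) (fun=> klinear_id M)
  (fun=> klinear_id N) st.
by rewrite !flatmap_seq1.
Qed.

Lemma tens3k_eq_map (M0 N0 Q0 : lmodType k) (f : M0 -> M) (g : N0 -> N) (h : Q0 -> Q) :
  is_klinear f -> is_klinear g -> is_klinear h ->
  forall s t, tens3k_eq s t ->
  T3 (map (fun p => (f p.1, (g p.2.1, h p.2.2))) s)
     (map (fun p => (f p.1, (g p.2.1, h p.2.2))) t).
Proof.
move=> fL gL hL s t st; rewrite -!flatmap_seq1; move: s t st.
apply: tens3_eq_flatmap; split.
- split=> * /=; rewrite ?(proj1 fL) ?(proj1 gL) ?(proj1 hL);
    [exact: tens3_add1 | exact: tens3_add2 | exact: tens3_add3].
- split=> * /=; rewrite ?(klinear0 fL) ?(klinear0 gL) ?(klinear0 hL);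
    [exact: tens3_01 | exact: tens3_02 | exact: tens3_03].
- by move=> * /=; rewrite (proj2 fL) (proj2 gL); apply: tens3_scale12.
- by move=> * /=; rewrite (proj2 gL) (proj2 hL); apply: tens3_scale23.
- by split.
Qed.

End Tensor3Generators.

(** * The canonical map *)

Section ComoduleCategory.
Variables (k : comPzRingType) (X : Type) (H : semiHopf k X) (A : comodcat H).

Lemma crho_klinear x y : is_klinear_tk (@crho k X H A x y).
Proof. by case: (crho_comod A x y). Qed.

Lemma Delta_klinear x y : is_klinear_tk (@Delta k X H x y).
Proof. by case: (coalgH H x y). Qed.

Lemma epsD x y (h h' : H x y) : eps H (h + h') = eps H h + eps H h'.
Proof. by case: (coalgH H x y) => _ []. Qed.

Lemma epsZ x y c (h : H x y) : eps H (c *: h) = c * eps H h.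
Proof. by case: (coalgH H x y) => _ []. Qed.

Lemma crho0 x y : tensk_eq (crho A (0 : A x y)) [::].
Proof. exact: klinear_tk0 (crho_klinear x y). Qed.

Lemma Delta0 x y : tensk_eq (Delta H (0 : H x y)) [::].
Proof. exact: klinear_tk0 (Delta_klinear x y). Qed.

Lemma crhoD x y (a a' : A x y) : tensk_eq (crho A (a + a')) (crho A a ++ crho A a').
Proof. by case: (crho_klinear x y). Qed.

Lemma crhoZ x y c (a : A x y) :
  tensk_eq (crho A (c *: a)) [seq (c *: p.1, p.2) | p <- crho A a].
Proof. by case: (crho_klinear x y). Qed.

Lemma DeltaD x y (h h' : H x y) : tensk_eq (Delta H (h + h')) (Delta H h ++ Delta H h').
Proof. by case: (Delta_klinear x y). Qed.

Lemma DeltaZ x y c (h : H x y) :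
  tensk_eq (Delta H (c *: h)) [seq (c *: p.1, p.2) | p <- Delta H h].
Proof. by case: (Delta_klinear x y). Qed.

Lemma crho_counit x y (a : A x y) : \sum_(q <- crho A a) eps H q.2 *: q.1 = a.
Proof. by case: (crho_comod A x y). Qed.

Definition tmul (M : rmod A) x y z (s : seq (M x y * H x y)) (t : seq (A y z * H y z)) :
  seq (M x z * H x z) :=
  flatmap (fun p => [seq (act M p.1 q.1, comp H p.2 q.2) | q <- t]) s.

Lemma tmul_eql (M : rmod A) x y z (s s' : seq (M x y * H x y)) (t : seq (A y z * H y z)) :
  tensk_eq s s' -> tensk_eq (tmul s t) (tmul s' t).
Proof.
exact: (tensk_eq_lin_family t (fun q => act_klinearl q.1) (fun q => comp_klinearl q.2)).
Qed.

Lemma tmul_eqr (M : rmod A) x y z (s : seq (M x y * H x y)) (t t' : seq (A y z * H y z)) :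
  tensk_eq t t' -> tensk_eq (tmul s t) (tmul s t').
Proof.
by move=> tt'; apply: fs_flatmap => p; apply: tensk_eq_map tt';
  [apply: act_klinearr | apply: comp_klinearr].
Qed.

Lemma crho_comp_coinvl x y (b : A x x) (a : A x y) : coinv b ->
  tensk_eq (crho A (comp A b a)) [seq (comp A b q.1, q.2) | q <- crho A a].
Proof.
move=> hb; apply: fs_trans (crho_comp _ _) _.
apply: fs_trans (@tmul_eql (regular_rmod A) _ _ _ _ _ (crho A a) hb) _.
by apply: fs_of_eq; rewrite /tmul flatmap1; apply: eq_map => q; rewrite comp1l.
Qed.

Lemma crho_comp_coinvr x y (a : A y x) (b : A x x) : coinv b ->
  tensk_eq (crho A (comp A a b)) [seq (comp A q.1 b, q.2) | q <- crho A a].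
Proof.
move=> hb; apply: fs_trans (crho_comp _ _) _.
apply: fs_trans (@tmul_eqr (regular_rmod A) _ _ _ (crho A a) _ _ hb) _.
rewrite /tmul -flatmap_seq1; apply: fs_of_eq; apply: eq_flatmap => q /=.
by rewrite comp1r.
Qed.

(* [M_zx (x)_{B_x} A_xy] *)
Definition tensB_eq (M : rmod A) z x y : seq (M z x * A x y) -> seq (M z x * A x y) -> Prop :=
  tens2_eq (@coinv k X H A x) (fun m b => act M m b) (fun b a => comp A b a).

(* The canonical map [m (x) a |-> m a_[0] (x) a_[1]]; for [M = A] it is [can_map]. *)
Definition canM (M : rmod A) z x y (s : seq (M z x * A x y)) : seq (M z y * H x y) :=
  flatmap (fun p => [seq (act M p.1 q.1, q.2) | q <- crho A p.2]) s.

Lemma canM_eq (M : rmod A) z x y (s t : seq (M z x * A x y)) :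
  tensB_eq s t -> tensk_eq (canM s) (canM t).
Proof.
apply: tens2_eq_flatmap; split.
- by move=> m m' a; apply: fs_map_split => q; rewrite actDl; apply: tensk_addl.
- by move=> m a a' /=; rewrite -map_cat; exact: (tensk_eq_mapl (act_klinearr m) (crhoD a a')).
- split=> [a|m] /=; first by apply: fs_map_nil => q; rewrite act0l; apply: tensk_0l.
  exact: (tensk_eq_mapl (act_klinearr m) (crho0 _ _)).
- move=> c m a /=; apply: fs_trans (fs_sym (tensk_eq_mapl (act_klinearr _) (crhoZ _ _))).
  by rewrite -map_comp; apply: fs_of_eq; apply: eq_map => q /=; rewrite actZl actZr.
- move=> b m a hb /=.
  apply: fs_trans (fs_sym (tensk_eq_mapl (act_klinearr _) (crho_comp_coinvl _ hb))).
  by rewrite -map_comp; apply: fs_of_eq; apply: eq_map => q /=; rewrite actA.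
Qed.

Lemma canM_counit (M : rmod A) z x y (s : seq (M z x * A x y)) :
  \sum_(p <- canM s) eps H p.2 *: p.1 = \sum_(p <- s) act M p.1 p.2.
Proof.
elim: s => [|p s IH]; first by rewrite !big_nil.
rewrite /canM flatmap_cons big_cat -/(canM s) IH big_cons big_map; congr (_ + _).
rewrite -[in RHS](crho_counit p.2) (klinear_sum _ _ (act_klinearr _)).
by apply: eq_bigr => q _; rewrite actZr.
Qed.

Lemma canM_scale (M : rmod A) z x y c (s : seq (M z x * A x y)) :
  canM [seq (c *: p.1, p.2) | p <- s] = [seq (c *: p.1, p.2) | p <- canM s].
Proof.
rewrite /canM flatmap_map map_flatmap; apply: eq_flatmap => p /=.
by rewrite -!map_comp; apply: eq_map => q /=; rewrite actZl.
Qed.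

Lemma canM_comp (M : rmod A) x y z (s : seq (M x x * A x y)) (a : A y z) :
  tensk_eq (canM [seq (p.1, comp A p.2 a) | p <- s]) (tmul (canM s) (crho A a)).
Proof.
rewrite /canM /tmul flatmap_map flatmapA; apply: fs_flatmap => p /=.
apply: fs_trans (tensk_eq_mapl (act_klinearr _) (crho_comp _ _)) _.
rewrite /tmul map_flatmap flatmap_map; apply: fs_of_eq; apply: eq_flatmap => q /=.
by rewrite -map_comp; apply: eq_map => r /=; rewrite actA.
Qed.

Lemma canM_morph (M M' : rmod A) (f : forall x y, M x y -> M' x y) z x y
    (s : seq (M z x * A x y)) : rmod_morph f ->
  canM [seq (f z x p.1, p.2) | p <- s] = [seq (f z y p.1, p.2) | p <- canM s].
Proof.
case=> _ _ f_act; rewrite /canM flatmap_map map_flatmap; apply: eq_flatmap => p /=.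
by rewrite -map_comp; apply: eq_map => q /=; rewrite f_act.
Qed.

End ComoduleCategory.

Arguments tmul {k X H A M x y z}.
Arguments tensB_eq {k X H A M z x y}.
Arguments canM {k X H A M z x y}.

(** * From descent data to relative Hopf modules *)

Section IteratedCoaction.
Variables (k : comPzRingType) (X : Type) (H : semiHopf k X) (A : comodcat H).

Definition idDelta z w x y (s : seq (A z w * H x y)) : seq (A z w * (H x y * H x y)) :=
  flatmap (fun p => [seq (p.1, d) | d <- Delta H p.2]) s.

Definition crho2 x y (a : A x y) := idDelta (crho A a).

Lemma idDelta_eq z w x y (s t : seq (A z w * H x y)) :
  tensk_eq s t -> tens3k_eq (idDelta s) (idDelta t).
Proof.
apply: tens2_eq_flatmap; split.
- by move=> a a' h; apply: fs_map_split => -[d1 d2]; apply: tens3_add1.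
- by move=> a h h' /=; rewrite -map_cat; apply/tensk_tens3_pre/DeltaD.
- split=> [h|a] /=; first by apply: fs_map_nil => -[d1 d2]; apply: tens3_01.
  exact: (tensk_tens3_pre a (Delta0 H x y)).
- move=> c a h /=; apply: fs_trans _ (fs_sym (tensk_tens3_pre a (DeltaZ c h))).
  by rewrite -map_comp; apply: fs_map => -[d1 d2]; apply: tens3_scale12.
- by [].
Qed.

Lemma idDelta_mapl z w x y (f : A z w -> A z w) (s : seq (A z w * H x y)) :
  idDelta [seq (f p.1, p.2) | p <- s] = [seq (f v.1, v.2) | v <- idDelta s].
Proof.
by rewrite /idDelta flatmap_map map_flatmap; apply: eq_flatmap => p; rewrite -!map_comp.
Qed.

Lemma crho_coassoc x y (a : A x y) :
  tens3k_eq [seq (q.1, (q.2, p.2)) | p <- crho A a, q <- crho A p.1] (crho2 a).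
Proof.
case: (crho_comod A x y) => _ coassoc _; apply: fs_trans (coassoc a) _.
by apply: fs_of_eq; apply: eq_flatmap => p; apply: eq_map => -[].
Qed.

Section Coassociativity.
Variables (M : rmod A) (x y : X).

Definition tmul3 (s : seq (M x x * H x x)) (V : seq (A x y * (H x y * H x y))) :
  seq (M x y * (H x y * H x y)) :=
  flatmap (fun w => [seq (act M w.1 v.1, (comp H w.2 v.2.1, v.2.2)) | v <- V]) s.

Lemma tmul3_eql V (s t : seq (M x x * H x x)) : tensk_eq s t ->
  tens3k_eq (tmul3 s V) (tmul3 t V).
Proof.
exact: (tensk_tens3_12 V (f := fun v m => act M m v.1) (g := fun v h => comp H h v.2.1)
  (fun v => v.2.2) (fun v => act_klinearl _) (fun v => comp_klinearl _)).
Qed.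

Lemma tmul3_eqr s (V V' : seq (A x y * (H x y * H x y))) : tens3k_eq V V' ->
  tens3k_eq (tmul3 s V) (tmul3 s V').
Proof.
move=> VV'; apply: fs_flatmap => w.
exact: (tens3k_eq_map (act_klinearr w.1) (comp_klinearr w.2) (klinear_id _) VV').
Qed.

Lemma tmul3_catr s V V' : tens3k_eq (tmul3 s (V ++ V')) (tmul3 s V ++ tmul3 s V').
Proof.
by rewrite /tmul3; under eq_flatmap => w do rewrite map_cat; apply: fs_flatmap_cat.
Qed.

Lemma tmul3_scale c s V :
  tmul3 [seq (c *: w.1, w.2) | w <- s] V = tmul3 s [seq (c *: v.1, v.2) | v <- V].
Proof.
rewrite /tmul3 flatmap_map; apply: eq_flatmap => w /=.
by rewrite -map_comp; apply: eq_map => v /=; rewrite actZl actZr.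
Qed.

Lemma tmul3_act (b : A x x) s V :
  tmul3 [seq (act M w.1 b, w.2) | w <- s] V = tmul3 s [seq (comp A b v.1, v.2) | v <- V].
Proof.
rewrite /tmul3 flatmap_map; apply: eq_flatmap => w /=.
by rewrite -map_comp; apply: eq_map => v /=; rewrite actA.
Qed.

Definition can2M (p : M x x * (A x x * A x y)) : seq (M x y * (H x y * H x y)) :=
  tmul3 (canM [:: (p.1, p.2.1)]) (crho2 p.2.2).

Lemma can2M_balanced a (u u' : seq (M x x * A x x)) : tensB_eq u u' ->
  tens3k_eq (tmul3 (canM u) (crho2 a)) (tmul3 (canM u') (crho2 a)).
Proof. by move=> uu'; apply/tmul3_eql/canM_eq. Qed.

Lemma can2M_eq s t : tensBMAA_eq s t -> tens3k_eq (flatmap can2M s) (flatmap can2M t).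
Proof.
have tB (u v : seq (M x x * A x x)) :
    tens2_gen (@coinv k X H A x) (fun m b => act M m b) (fun b a => comp A b a) u v ->
    tensB_eq u v by apply: fs_gen.
have canM_cat a u u' : tmul3 (canM (u ++ u')) (crho2 a) =
    tmul3 (canM u) (crho2 a) ++ tmul3 (canM u') (crho2 a).
  by rewrite /canM /tmul3 !flatmap_cat.
apply: tens3_eq_flatmap; rewrite /can2M; split.
- split=> [m m' a a'|m a a' a''|m a a' a''] /=.
  + by rewrite -canM_cat; apply/can2M_balanced/tB/t2_addl.
  + by rewrite -canM_cat; apply/can2M_balanced/tB/t2_addr.
  + apply: fs_trans (tmul3_eqr _ (idDelta_eq (crhoD _ _))) _.
    by rewrite /crho2 /idDelta flatmap_cat; apply: tmul3_catr.
- split=> [a a'|m a'|m a] /=.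
  + exact: (can2M_balanced a' (tB _ _ (t2_zerol _ _ _ a))).
  + exact: (can2M_balanced a' (tB _ _ (t2_zeror _ _ _ m))).
  + apply: fs_trans (tmul3_eqr _ (idDelta_eq (crho0 _ _ _))) _.
    by apply: fs_flatmap_nil => w; apply: fs_refl.
- by move=> c m a a'; apply/can2M_balanced/tB/t2_scal.
- move=> c m a a' /=.
  apply: fs_trans (can2M_balanced a' (fs_sym (tB _ _ (t2_scal _ _ _ c m a)))) _.
  rewrite (_ : [:: (c *: m, a)] = [seq (c *: p.1, p.2) | p <- [:: (m, a)]]) //.
  rewrite canM_scale tmul3_scale; apply/tmul3_eqr/fs_sym.
  by rewrite /crho2 -idDelta_mapl; apply/idDelta_eq/crhoZ.
- split=> [b m a a' hb|b m a a' hb] /=.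
  + by apply/can2M_balanced/tB/t2_bal.
  + have canM_coinv : tensk_eq (canM [:: (m, comp A a b)])
        [seq (act M w.1 b, w.2) | w <- canM [:: (m, a)]].
      rewrite /canM !flatmap1 -map_comp /=.
      apply: fs_trans (tensk_eq_mapl (act_klinearr m) (crho_comp_coinvr a hb)) _.
      by rewrite -map_comp; apply: fs_of_eq; apply: eq_map => q /=; rewrite actA.
    apply: fs_trans (tmul3_eql _ canM_coinv) _; rewrite tmul3_act.
    apply/tmul3_eqr/fs_sym.
    by rewrite /crho2 -idDelta_mapl; apply/idDelta_eq/crho_comp_coinvl.
Qed.

Lemma can2M_unit (u : seq (M x x * A x y)) :
  tens3k_eq (flatmap can2M [seq (p.1, (idm A x, p.2)) | p <- u])
            [seq (p.1, (q.1, q.2)) | p <- canM u, q <- Delta H p.2].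
Proof.
rewrite flatmap_map allpairs_flatmap /canM flatmapA; apply: fs_flatmap => p /=.
have can_unit : tensk_eq (canM [:: (p.1, idm A x)]) [:: (p.1, idm H x)].
  rewrite /canM flatmap1; apply: fs_trans (tensk_eq_mapl (act_klinearr p.1) (crho_id A x)) _.
  by rewrite /= act1; apply: fs_refl.
apply: fs_trans (tmul3_eql _ can_unit) _.
rewrite /tmul3 flatmap1 /crho2 /idDelta map_flatmap flatmap_map.
apply: fs_of_eq; apply: eq_flatmap => e /=; rewrite -map_comp; apply: eq_map => d /=.
by rewrite comp1l; case: d.
Qed.

End Coassociativity.
End IteratedCoaction.

Arguments idDelta {k X H A z w x y}.
Arguments crho2 {k X H A x y}.
Arguments tmul3 {k X H A M x y}.
Arguments can2M {k X H A M x y}.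

Section DescentToHopfModule.
Variables (k : comPzRingType) (X : Type) (H : semiHopf k X) (A : comodcat H).
Variables (M : rmod A) (sigma : forall x y, M x y -> seq (M x x * A x y)).
Hypothesis sigma_descent : is_descent sigma.

Lemma rho_of_klinear x y : is_klinear_tk (rho_of sigma (x:=x) (y:=y)).
Proof.
case: sigma_descent => sigmaD sigmaZ _ _ _; split=> [m m'|c m].
  by apply: fs_trans (canM_eq (sigmaD _ _ m m')) _; rewrite /canM flatmap_cat; apply: fs_refl.
by apply: fs_trans (canM_eq (sigmaZ _ _ c m)) _; rewrite canM_scale; apply: fs_refl.
Qed.

Lemma rho_of_act x y z (m : M x y) (a : A y z) :
  tensk_eq (rho_of sigma (act M m a)) (tmul (rho_of sigma m) (crho A a)).
Proof.
case: sigma_descent => _ _ sigma_act _ _.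
exact: fs_trans (canM_eq (sigma_act _ _ _ m a)) (canM_comp _ _).
Qed.

Lemma rho_of_counit x y (m : M x y) : \sum_(p <- rho_of sigma m) eps H p.2 *: p.1 = m.
Proof. by case: sigma_descent => _ _ _ _ sigma_unit; rewrite canM_counit sigma_unit. Qed.

(* [rho (rho m)] computed through [rho (m_<0> m_<1>[0]) = rho (m_<0>) crho (m_<1>[0])]. *)
Lemma rho_of_rho_of x y (m : M x y) :
  tens3k_eq [seq (q.1, (q.2, p.2)) | p <- rho_of sigma m, q <- rho_of sigma p.1]
            (flatmap (fun s => tmul3 (rho_of sigma s.1) (crho2 s.2)) (sigma m)).
Proof.
have -> : rho_of sigma m =
    flatmap (fun s => [seq (act M s.1 q.1, q.2) | q <- crho A s.2]) (sigma m) by [].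
rewrite allpairs_flatmap flatmapA; apply: fs_flatmap => s; rewrite flatmap_map /=.
apply: fs_trans.
  by apply: fs_flatmap => a; apply: (tensk_tens3_post a.2 (rho_of_act s.1 a.1)).
pose Z (a : A x y * H x y) (w : M x x * H x x) :=
  [seq (act M w.1 q.1, (comp H w.2 q.2, a.2)) | q <- crho A a.1].
rewrite (_ : flatmap _ (crho A s.2) =
             flatmap (fun a => flatmap (Z a) (rho_of sigma s.1)) (crho A s.2)); last first.
  apply: eq_flatmap => a; rewrite /tmul map_flatmap.
  by apply: eq_flatmap => w; rewrite -map_comp.
apply: fs_trans (fs_flatmapC Z _ _) _; apply: fs_flatmap => w.
apply: fs_trans _ (tens3k_eq_map (act_klinearr w.1) (comp_klinearr w.2) (klinear_id _)
                     (crho_coassoc s.2)).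
rewrite map_flatmap; apply: fs_of_eq; apply: eq_flatmap => a.
by rewrite -map_comp.
Qed.

Lemma rho_of_coassoc x y (m : M x y) :
  tens3k_eq [seq (q.1, (q.2, p.2)) | p <- rho_of sigma m, q <- rho_of sigma p.1]
            [seq (p.1, (q.1, q.2)) | p <- rho_of sigma m, q <- Delta H p.2].
Proof.
case: sigma_descent => _ _ _ sigma_coassoc _.
have can2M_sigma2 : flatmap can2M [seq (q.1, (q.2, p.2)) | p <- sigma m, q <- sigma p.1]
    = flatmap (fun s => tmul3 (rho_of sigma s.1) (crho2 s.2)) (sigma m).
  rewrite (allpairs_flatmap (fun p q => (q.1, (q.2, p.2)))) flatmapA.
  apply: eq_flatmap => p; rewrite flatmap_map /rho_of /tmul3 /canM flatmapA.
  by apply: eq_flatmap => q; rewrite /can2M /tmul3 /canM flatmap1.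
apply: fs_trans (rho_of_rho_of m) _; rewrite -can2M_sigma2.
exact: fs_trans (can2M_eq (sigma_coassoc _ _ m)) (can2M_unit _).
Qed.

Lemma rho_of_hopfmod : is_hopfmod (rho_of sigma).
Proof.
split=> [x y|x y z m a]; last exact: rho_of_act.
split; [exact: rho_of_klinear | exact: rho_of_coassoc | exact: rho_of_counit].
Qed.

End DescentToHopfModule.

Lemma descent_morph_hopfmod_morph (k : comPzRingType) (X : Type) (H : semiHopf k X)
    (A : comodcat H) (M M' : rmod A) (sigma : forall x y, M x y -> seq (M x x * A x y))
    (sigma' : forall x y, M' x y -> seq (M' x x * A x y)) (f : forall x y, M x y -> M' x y) :
  descent_morph sigma sigma' f -> hopfmod_morph (rho_of sigma) (rho_of sigma') f.
Proof.
case=> f_morph f_sigma; split=> // x y m.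
by have := canM_eq (f_sigma x y m); rewrite canM_morph.
Qed.

(** * Galois extensions *)

Section GaloisExtension.
Variables (k : comPzRingType) (X : Type) (H : semiHopf k X) (A : comodcat H).
Hypothesis A_galois : is_galois A.
Local Notation AR := (regular_rmod A).

Lemma can_inj z x y (s t : seq (A z x * A x y)) :
  tensk_eq (canM (M := AR) s) (canM (M := AR) t) -> tensB_eq (M := AR) s t.
Proof. exact: (proj1 (A_galois z x y) s t). Qed.

(* The translation map [gamma h = can^-1 (1 (x) h)], in [A_yx (x)_{B_x} A_xy]. *)
Definition transl x y (h : H x y) : seq (A y x * A x y) :=
  proj1_sig (constructive_indefinite_description _ (proj2 (A_galois y x y) [:: (idm A y, h)])).

Lemma translP x y (h : H x y) : tensk_eq (canM (M := AR) (transl h)) [:: (idm A y, h)].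
Proof.
exact: (proj2_sig (constructive_indefinite_description _ (proj2 (A_galois y x y) _))).
Qed.

Definition lmul (M : rmod A) w z x y (n : M w z) (s : seq (A z x * A x y)) :
  seq (M w x * A x y) := [seq (act M n p.1, p.2) | p <- s].

Lemma lmul_eq (M : rmod A) w z x y (n : M w z) (s t : seq (A z x * A x y)) :
  tensB_eq (M := AR) s t -> tensB_eq (lmul n s) (lmul n t).
Proof.
move=> st; rewrite /lmul -!flatmap_seq1; move: s t st; apply: tens2_eq_flatmap; split.
- by move=> a a' b /=; rewrite actDr; apply/fs_gen/t2_addl.
- by move=> a b b' /=; apply/fs_gen/t2_addr.
- split=> [b|a] /=; last by apply/fs_gen/t2_zeror.
  by rewrite act0r; apply/fs_gen/t2_zerol.
- by move=> c a b /=; rewrite actZr; apply/fs_gen/t2_scal.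
- by move=> b a a' hb /=; rewrite -actA; apply/fs_gen/t2_bal.
Qed.

Lemma canM_lmul (M : rmod A) w z x y (n : M w z) (s : seq (A z x * A x y)) :
  canM (lmul n s) = [seq (act M n p.1, p.2) | p <- canM (M := AR) s].
Proof.
rewrite /canM /lmul flatmap_map map_flatmap; apply: eq_flatmap => p /=.
by rewrite -map_comp; apply: eq_map => q /=; rewrite actA.
Qed.

Lemma translD x y (h h' : H x y) :
  tensB_eq (M := AR) (transl (h + h')) (transl h ++ transl h').
Proof.
apply: can_inj; apply: fs_trans (translP _) _; rewrite /canM flatmap_cat -!/(canM _).
apply: fs_trans (tensk_addr _ _ _) _; rewrite -cat1s.
by apply: fs_cat; apply: fs_sym; apply: translP.
Qed.

Lemma transl0 x y : tensB_eq (M := AR) (transl (0 : H x y)) [::].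
Proof. by apply: can_inj; apply: fs_trans (translP _) _; apply: tensk_0r. Qed.

Lemma translZ x y c (h : H x y) :
  tensB_eq (M := AR) (transl (c *: h)) [seq (c *: p.1, p.2) | p <- transl h].
Proof.
apply: can_inj; apply: fs_trans (translP _) _; rewrite canM_scale.
apply: fs_trans (fs_sym (tensk_scale _ _ _)) _.
rewrite (_ : [:: (c *: idm A y, h)] = [seq (c *: p.1, p.2) | p <- [:: (idm A y, h)]]) //.
by apply: tensk_eq_mapl; [apply: klinearZ | apply/fs_sym/translP].
Qed.

Definition canM_inv (M : rmod A) w x y (t : seq (M w y * H x y)) : seq (M w x * A x y) :=
  flatmap (fun p => lmul p.1 (transl p.2)) t.

Lemma canM_inv_eq (M : rmod A) w x y (s t : seq (M w y * H x y)) :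
  tensk_eq s t -> tensB_eq (canM_inv s) (canM_inv t).
Proof.
apply: tens2_eq_flatmap; split.
- by move=> m m' h; apply: fs_map_split => u; rewrite actDl; apply/fs_gen/t2_addl.
- by move=> m h h' /=; rewrite /lmul -map_cat; apply/lmul_eq/translD.
- split=> [h|m] /=; last exact: (lmul_eq m (transl0 x y)).
  by rewrite /lmul; apply: fs_map_nil => u; rewrite act0l; apply/fs_gen/t2_zerol.
- move=> c m h /=; apply: fs_trans _ (fs_sym (lmul_eq m (translZ c h))).
  by rewrite /lmul -map_comp; apply: fs_of_eq; apply: eq_map => u /=; rewrite actZl actZr.
- by [].
Qed.

Lemma canM_invK (M : rmod A) w x y (t : seq (M w y * H x y)) :
  tensk_eq (canM (canM_inv t)) t.
Proof.
rewrite /canM_inv /canM flatmapA -{2}(flatmap_seq1_id t); apply: fs_flatmap => p.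
rewrite -/(canM _) canM_lmul; apply: fs_trans (tensk_eq_mapl (act_klinearr _) (translP _)) _.
by rewrite /= act1; case: p => ? ?; apply: fs_refl.
Qed.

Lemma canMK_regular z x y (s : seq (A z x * A x y)) :
  tensB_eq (M := AR) (canM_inv (canM (M := AR) s)) s.
Proof. exact/can_inj/canM_invK. Qed.

Lemma canM_inv1 (M : rmod A) w x y (n : M w x) (a : A x y) :
  canM_inv (canM [:: (n, a)]) = lmul n (canM_inv (canM (M := AR) [:: (idm A x, a)])).
Proof.
rewrite /canM_inv /canM !flatmap1 !flatmap_map /lmul map_flatmap; apply: eq_flatmap => q /=.
by rewrite -map_comp; apply: eq_map => u /=; rewrite actA comp1l.
Qed.

Lemma canMK (M : rmod A) z x y (s : seq (M z x * A x y)) : tensB_eq (canM_inv (canM s)) s.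
Proof.
have -> : canM_inv (canM s) = flatmap (fun p => canM_inv (canM [:: p])) s.
  by rewrite /canM_inv /canM flatmapA; apply: eq_flatmap => p; rewrite flatmap1.
rewrite -{2}(flatmap_seq1_id s); apply: fs_flatmap => -[n a].
rewrite canM_inv1; apply: fs_trans (lmul_eq n (canMK_regular _)) _.
by rewrite /lmul /= act1; apply: fs_refl.
Qed.

Lemma canM_inj (M : rmod A) z x y (s t : seq (M z x * A x y)) :
  tensk_eq (canM s) (canM t) -> tensB_eq s t.
Proof.
move=> st; apply: fs_trans (fs_sym (canMK s)) _; apply: fs_trans (canMK t).
exact: canM_inv_eq.
Qed.

End GaloisExtension.

Arguments transl {k X H A} A_galois {x y}.
Arguments canM_inv {k X H A} A_galois {M w x y}.
Arguments lmul {k X H A M w z x y}.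

Section GaloisTripleTensors.
Variables (k : comPzRingType) (X : Type) (H : semiHopf k X) (A : comodcat H).
Hypothesis A_galois : is_galois A.
Local Notation AR := (regular_rmod A).
Local Notation transl := (transl A_galois).
Local Notation canM_inv := (canM_inv A_galois).

(* [M_wx (x)_{B_x} A_xy (x) H_xy] *)
Definition tensBk_eq (M : rmod A) w x y :
  seq (M w x * (A x y * H x y)) -> seq (M w x * (A x y * H x y)) -> Prop :=
  tens3_eq (@coinv k X H A x) (fun m b => act M m b) (fun b a => comp A b a)
           (fun _ : unit => False) (fun h _ => h) (fun _ h => h).

Lemma tensB_tensBk_post (M : rmod A) w x y (c : H x y) (s t : seq (M w x * A x y)) :
  tensB_eq s t ->
  tensBk_eq [seq (r.1, (r.2, c)) | r <- s] [seq (r.1, (r.2, c)) | r <- t].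
Proof.
move=> st; rewrite -!flatmap_seq1; move: s t st; apply: tens2_eq_flatmap; split.
- by move=> *; apply: tens3_add1.
- by move=> *; apply: tens3_add2.
- by split=> *; [apply: tens3_01 | apply: tens3_02].
- by move=> *; apply: tens3_scale12.
- by move=> b m n hb; apply: (tens3_bal12 (P1 := @coinv k X H A x)).
Qed.

Lemma tensB_tensBMAA_pre (M : rmod A) x z y (n : M x x) (b : A x z)
    (s t : seq (A z x * A x y)) :
  tensB_eq (M := AR) s t ->
  tensBMAA_eq [seq (n, (comp A b p.1, p.2)) | p <- s]
              [seq (n, (comp A b p.1, p.2)) | p <- t].
Proof.
move=> st; rewrite -!flatmap_seq1; move: s t st; apply: tens2_eq_flatmap; split.
- by move=> a a' c /=; rewrite compDr; apply: tens3_add2.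
- by move=> *; apply: tens3_add3.
- by split=> * /=; [rewrite comp0r; apply: tens3_02 | apply: tens3_03].
- by move=> c a a' /=; rewrite compZr; apply: tens3_scale23.
- move=> c a a' hc /=; rewrite compA.
  exact: (tens3_bal23 (P2 := @coinv k X H A x) (ract2 := fun a b => comp A a b)).
Qed.

Lemma lmul_tensBk_eq (M : rmod A) w z x y (n : M w z) (s t : seq (A z x * (A x y * H x y))) :
  tensBk_eq (M := AR) s t ->
  tensBk_eq [seq (act M n p.1, p.2) | p <- s] [seq (act M n p.1, p.2) | p <- t].
Proof.
move=> st; rewrite -!flatmap_seq1; move: s t st; apply: tens3_eq_flatmap; split.
- split=> [a a' b h|*|*] /=; [rewrite actDr; apply: tens3_add1 | | ].
  + exact: tens3_add2.
  + exact: tens3_add3.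
- split=> [*|*|*] /=; [rewrite act0r; apply: tens3_01 | | ].
  + exact: tens3_02.
  + exact: tens3_03.
- by move=> c a b h /=; rewrite actZr; apply: tens3_scale12.
- by move=> *; apply: tens3_scale23.
- split=> // c a b h hc /=; rewrite -actA.
  exact: (tens3_bal12 (P1 := @coinv k X H A x) (ract1 := fun m b => act M m b)).
Qed.

(* Suffixes 12 and 23 name the two tensor factors a map acts on. *)
Definition canM_inv12 (M : rmod A) w x y (t : seq (M w y * (H x y * H x y))) :
  seq (M w x * (A x y * H x y)) :=
  flatmap (fun p => [seq (r.1, (r.2, p.2.2)) | r <- lmul p.1 (transl p.2.1)]) t.

Lemma canM_inv12_eq (M : rmod A) w x y (s t : seq (M w y * (H x y * H x y))) :
  tens3k_eq s t -> tensBk_eq (canM_inv12 s) (canM_inv12 t).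
Proof.
apply: tens3_eq_flatmap; split.
- split=> [n n' h h'|n h h' h''|n h h' h''] /=.
  + rewrite /lmul -!map_comp.
    by apply: fs_map_split => u /=; rewrite actDl; apply: tens3_add1.
  + rewrite -map_cat; apply: tensB_tensBk_post.
    by rewrite /lmul -map_cat; apply/lmul_eq/translD.
  + by rewrite /lmul -!map_comp; apply: fs_map_split => u /=; apply: tens3_add3.
- split=> [h h'|n h|n h] /=.
  + rewrite /lmul -!map_comp.
    by apply: fs_map_nil => u /=; rewrite act0l; apply: tens3_01.
  + exact: (tensB_tensBk_post h (lmul_eq n (transl0 A_galois x y))).
  + by rewrite /lmul -!map_comp; apply: fs_map_nil => u /=; apply: tens3_03.
- move=> c n h h' /=.
  apply: fs_trans _ (fs_sym (tensB_tensBk_post h' (lmul_eq n (translZ A_galois c h)))).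
  rewrite /lmul -!map_comp; apply: fs_of_eq; apply: eq_map => u /=.
  by rewrite actZl actZr.
- move=> c n h h' /=.
  apply: fs_trans (tensB_tensBk_post h' (lmul_eq n (translZ A_galois c h))) _.
  rewrite /lmul -!map_comp; apply: fs_map => u /=; rewrite actZr.
  exact: fs_trans (tens3_scale12 _ _ _ _) (tens3_scale23 _ _ _ _).
- by split.
Qed.

Definition canM_inv23 (M : rmod A) x y (t : seq (M x x * (A x y * H x y))) :
  seq (M x x * (A x x * A x y)) :=
  flatmap (fun p => [seq (p.1, (comp A p.2.1 u.1, u.2)) | u <- transl p.2.2]) t.

Lemma canM_inv23_eq (M : rmod A) x y (s t : seq (M x x * (A x y * H x y))) :
  tensBk_eq s t -> tensBMAA_eq (canM_inv23 s) (canM_inv23 t).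
Proof.
apply: tens3_eq_flatmap; split.
- split=> [n n' a h|n a a' h|n a h h'] /=.
  + by apply: fs_map_split => u; apply: tens3_add1.
  + by apply: fs_map_split => u /=; rewrite compDl; apply: tens3_add2.
  + by rewrite -map_cat; apply/tensB_tensBMAA_pre/translD.
- split=> [a h|n h|n a] /=.
  + by apply: fs_map_nil => u; apply: tens3_01.
  + by apply: fs_map_nil => u /=; rewrite comp0l; apply: tens3_02.
  + exact: (tensB_tensBMAA_pre n a (transl0 A_galois x y)).
- by move=> c n a h /=; apply: fs_map => u /=; rewrite compZl; apply: tens3_scale12.
- move=> c n a h /=; apply: fs_trans _ (fs_sym (tensB_tensBMAA_pre n a (translZ A_galois c h))).
  rewrite -map_comp; apply: fs_of_eq; apply: eq_map => u /=.
  by rewrite compZl compZr.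
- split=> // b n a h hb /=; apply: fs_map => u /=; rewrite -compA.
  exact: (tens3_bal12 (P1 := @coinv k X H A x) (ract1 := fun m b => act M m b)
                      (lact1 := fun b a => comp A b a)).
Qed.

Definition can23 (M : rmod A) x y (s : seq (M x x * (A x x * A x y))) :
  seq (M x x * (A x y * H x y)) :=
  flatmap (fun p => [seq (p.1, (comp A p.2.1 q.1, q.2)) | q <- crho A p.2.2]) s.

Lemma can23K (M : rmod A) x y (s : seq (M x x * (A x x * A x y))) :
  tensBMAA_eq (canM_inv23 (can23 s)) s.
Proof.
rewrite /canM_inv23 /can23 flatmapA -{2}(flatmap_seq1_id s); apply: fs_flatmap => -[n [b a]].
rewrite flatmap_map /=.
rewrite (_ : flatmap _ _ = [seq (n, (comp A b r.1, r.2)) | r <- canM_inv (canM (M := AR)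
                                                                 [:: (idm A x, a)])]).
  apply: fs_trans (tensB_tensBMAA_pre n b (canMK_regular A_galois _)) _.
  by rewrite /= comp1r; apply: fs_refl.
rewrite /canM_inv /canM flatmap1 flatmap_map map_flatmap; apply: eq_flatmap => q /=.
by rewrite /lmul -!map_comp; apply: eq_map => u /=; rewrite comp1l compA.
Qed.

Lemma can23_inj (M : rmod A) x y (s t : seq (M x x * (A x x * A x y))) :
  tensBk_eq (can23 s) (can23 t) -> tensBMAA_eq s t.
Proof.
move=> st; apply: fs_trans (fs_sym (can23K s)) _; apply: fs_trans (can23K t).
exact: canM_inv23_eq.
Qed.

Definition can12 x y (s : seq (A y x * (A x y * H x y))) : seq (A y y * (H x y * H x y)) :=
  flatmap (fun p => [seq (comp A p.1 q.1, (q.2, p.2.2)) | q <- crho A p.2.1]) s.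

Lemma can12K x y (s : seq (A y x * (A x y * H x y))) :
  tensBk_eq (M := AR) (canM_inv12 (M := AR) (can12 s)) s.
Proof.
rewrite /canM_inv12 /can12 flatmapA -{2}(flatmap_seq1_id s); apply: fs_flatmap => -[b [a h]].
rewrite flatmap_map /=.
rewrite (_ : flatmap _ _ = [seq (r.1, (r.2, h)) | r <- lmul (M := AR) b
                             (canM_inv (canM (M := AR) [:: (idm A x, a)]))]).
  apply: fs_trans (tensB_tensBk_post h (lmul_eq (M := AR) b (canMK_regular A_galois _))) _.
  by rewrite /= comp1r; apply: fs_refl.
rewrite /canM_inv /canM flatmap1 flatmap_map /lmul !map_flatmap; apply: eq_flatmap => q /=.
by rewrite -!map_comp; apply: eq_map => u /=; rewrite comp1l compA.
Qed.

Lemma can12_inj x y (s t : seq (A y x * (A x y * H x y))) :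
  tens3k_eq (can12 s) (can12 t) -> tensBk_eq (M := AR) s t.
Proof.
move=> st; apply: fs_trans (fs_sym (can12K s)) _; apply: fs_trans (can12K t).
exact: canM_inv12_eq.
Qed.

End GaloisTripleTensors.

Arguments tensBk_eq {k X H A M w x y}.
Arguments canM_inv12 {k X H A} A_galois {M w x y}.
Arguments canM_inv23 {k X H A} A_galois {M x y}.
Arguments can23 {k X H A M x y}.
Arguments can12 {k X H A x y}.

Section TranslationMap.
Variables (k : comPzRingType) (X : Type) (H : semiHopf k X) (A : comodcat H).
Hypothesis A_galois : is_galois A.
Local Notation AR := (regular_rmod A).
Local Notation transl := (transl A_galois).

Definition transl_Delta x y (h : H x y) : seq (A y x * (A x y * H x y)) :=
  flatmap (fun d => [seq (u.1, (u.2, d.2)) | u <- transl d.1]) (Delta H h).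

Definition transl_crho x y (h : H x y) : seq (A y x * (A x y * H x y)) :=
  flatmap (fun u => [seq (u.1, (e.1, e.2)) | e <- crho A u.2]) (transl h).

Lemma can12_transl_Delta x y (h : H x y) :
  tens3k_eq (can12 (transl_Delta h)) [seq (idm A y, d) | d <- Delta H h].
Proof.
rewrite /transl_Delta /can12 flatmapA -flatmap_seq1; apply: fs_flatmap => -[d1 d2].
rewrite flatmap_map /=.
rewrite (_ : flatmap _ _ = [seq (r.1, (r.2, d2)) | r <- canM (M := AR) (transl d1)]).
  exact: (tensk_tens3_post d2 (translP A_galois d1)).
by rewrite /canM map_flatmap; apply: eq_flatmap => u; rewrite -map_comp.
Qed.

Lemma can12_transl_crho x y (h : H x y) :
  tens3k_eq (can12 (transl_crho h)) [seq (idm A y, d) | d <- Delta H h].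
Proof.
apply: fs_trans (_ : tens3k_eq _ (idDelta (canM (M := AR) (transl h)))) _; last first.
  by have := idDelta_eq (translP A_galois h); rewrite /idDelta flatmap1.
rewrite /transl_crho /can12 /canM /idDelta !flatmapA; apply: fs_flatmap => u.
rewrite !flatmap_map /=.
rewrite (_ : flatmap _ (crho A u.2) = [seq (comp A u.1 p.1, (p.2.1, p.2.2))
                  | p <- [seq (q.1, (q.2, e.2)) | e <- crho A u.2, q <- crho A e.1]]).
  rewrite (_ : flatmap _ (crho A u.2) = [seq (comp A u.1 p.1, (p.2.1, p.2.2))
                                        | p <- crho2 u.2]).
    exact: (tens3k_eq_map (comp_klinearr u.1) (klinear_id _) (klinear_id _)
              (crho_coassoc u.2)).
  rewrite /crho2 /idDelta map_flatmap; apply: eq_flatmap => q.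
  by rewrite -map_comp; apply: eq_map => -[].
rewrite map_flatmap; apply: eq_flatmap => e; rewrite -map_comp.
by apply: eq_map => q.
Qed.

Lemma transl_Delta_crho x y (h : H x y) :
  tensBk_eq (M := AR) (transl_Delta h) (transl_crho h).
Proof.
apply: (can12_inj A_galois).
exact: fs_trans (can12_transl_Delta h) (fs_sym (can12_transl_crho h)).
Qed.

End TranslationMap.

(** * From relative Hopf modules to descent data *)

Section HopfModuleToDescent.
Variables (k : comPzRingType) (X : Type) (H : semiHopf k X) (A : comodcat H).
Hypothesis A_galois : is_galois A.
Variables (M : rmod A) (rho : forall x y, M x y -> seq (M x y * H x y)).
Hypothesis rho_hopfmod : is_hopfmod rho.

Lemma rhoD x y (m m' : M x y) : tensk_eq (rho (m + m')) (rho m ++ rho m').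
Proof. by case: rho_hopfmod => h _; case: (h x y) => -[]. Qed.

Lemma rho0 x y : tensk_eq (rho (0 : M x y)) [::].
Proof. by case: rho_hopfmod => h _; case: (h x y) => /klinear_tk0. Qed.

Lemma rhoZ x y c (m : M x y) : tensk_eq (rho (c *: m)) [seq (c *: p.1, p.2) | p <- rho m].
Proof. by case: rho_hopfmod => h _; case: (h x y) => -[]. Qed.

Lemma rho_counit x y (m : M x y) : \sum_(p <- rho m) eps H p.2 *: p.1 = m.
Proof. by case: rho_hopfmod => h _; case: (h x y). Qed.

Lemma rho_coassoc x y (m : M x y) :
  tens3k_eq [seq (q.1, (q.2, p.2)) | p <- rho m, q <- rho p.1]
            [seq (p.1, (q.1, q.2)) | p <- rho m, q <- Delta H p.2].
Proof. by case: rho_hopfmod => h _; case: (h x y). Qed.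

Lemma rho_act x y z (m : M x y) (a : A y z) :
  tensk_eq (rho (act M m a)) (tmul (rho m) (crho A a)).
Proof. by case: rho_hopfmod => _; apply. Qed.

Definition descent_of x y (m : M x y) : seq (M x x * A x y) := canM_inv A_galois (rho m).

Lemma rho_of_descent_of x y (m : M x y) : tensk_eq (rho_of descent_of m) (rho m).
Proof. exact: canM_invK. Qed.

Lemma descent_ofD x y (m m' : M x y) :
  tensBMA_eq (descent_of (m + m')) (descent_of m ++ descent_of m').
Proof.
apply: (canM_inj A_galois); apply: fs_trans (rho_of_descent_of _) _.
apply: fs_trans (rhoD _ _) _; rewrite /canM flatmap_cat -!/(canM _).
by apply: fs_cat; apply: fs_sym; apply: rho_of_descent_of.
Qed.

Lemma descent_of0 x y : tensBMA_eq (descent_of (0 : M x y)) [::].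
Proof.
by apply: (canM_inj A_galois); apply: fs_trans (rho_of_descent_of _) (rho0 x y).
Qed.

Lemma descent_ofZ x y c (m : M x y) :
  tensBMA_eq (descent_of (c *: m)) [seq (c *: p.1, p.2) | p <- descent_of m].
Proof.
apply: (canM_inj A_galois); apply: fs_trans (rho_of_descent_of _) _.
apply: fs_trans (rhoZ _ _) _; rewrite canM_scale.
by apply: tensk_eq_mapl; [apply: klinearZ | apply/fs_sym/rho_of_descent_of].
Qed.

Lemma descent_of_act x y z (m : M x y) (a : A y z) :
  tensBMA_eq (descent_of (act M m a)) [seq (p.1, comp A p.2 a) | p <- descent_of m].
Proof.
apply: (canM_inj A_galois); apply: fs_trans (rho_of_descent_of _) _.
apply: fs_trans (rho_act _ _) _; apply: fs_trans _ (fs_sym (canM_comp _ _)).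
by apply/tmul_eql/fs_sym/rho_of_descent_of.
Qed.

Lemma descent_of_unit x y (m : M x y) : \sum_(p <- descent_of m) act M p.1 p.2 = m.
Proof.
rewrite -canM_counit -[RHS](rho_counit m).
apply: (tensk_eq_sum (e := fun (n : M x y) (h : H x y) => eps H h *: n)).
- by move=> h; apply: klinearZ.
- by move=> n h h'; rewrite epsD scalerDl.
- by move=> n; rewrite -(scale0r (0 : H x y)) epsZ mul0r scale0r.
- by move=> c n h; rewrite epsZ scalerA mulrC.
- exact: rho_of_descent_of.
Qed.

Local Notation sigma := descent_of.

Definition descent_ofH x y (p : M x y * H x y) : seq (M x x * (A x y * H x y)) :=
  [seq (r.1, (r.2, p.2)) | r <- sigma p.1].

Lemma descent_ofH_eq x y (s t : seq (M x y * H x y)) :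
  tensk_eq s t -> tensBk_eq (flatmap (@descent_ofH x y) s) (flatmap (@descent_ofH x y) t).
Proof.
apply: tens2_eq_flatmap; rewrite /descent_ofH; split.
- by move=> n n' h /=; rewrite -map_cat; apply/tensB_tensBk_post/descent_ofD.
- by move=> n h h' /=; apply: fs_map_split => r; apply: tens3_add3.
- split=> [h|n] /=; first exact: (tensB_tensBk_post h (descent_of0 x y)).
  by apply: fs_map_nil => r; apply: tens3_03.
- move=> c n h /=; apply: fs_trans (tensB_tensBk_post h (descent_ofZ c n)) _.
  rewrite -map_comp; apply: fs_map => r /=.
  exact: fs_trans (tens3_scale12 _ _ _ _) (tens3_scale23 _ _ _ _).
- by [].
Qed.

Lemma can23_descent_of2 x y (m : M x y) :
  tensBk_eq (can23 [seq (q.1, (q.2, p.2)) | p <- sigma m, q <- sigma p.1])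
            (flatmap (@descent_ofH x y) (rho m)).
Proof.
apply: fs_trans _ (descent_ofH_eq (rho_of_descent_of m)).
rewrite (_ : rho_of sigma m = canM (sigma m)) //.
rewrite (allpairs_flatmap (fun p q => (q.1, (q.2, p.2)))) /can23 /canM !flatmapA.
apply: fs_flatmap => r; apply: fs_flatmap => p; rewrite !flatmap_map /=.
rewrite (_ : flatmap _ (sigma p.1) = flatmap (fun q => flatmap (fun e =>
              [:: (q.1, (comp A q.2 e.1, e.2))]) (crho A p.2)) (sigma p.1)); last first.
  by apply: eq_flatmap => q; rewrite flatmap_seq1.
apply: fs_trans (fs_flatmapC _ _ _) _; apply: fs_flatmap => e.
rewrite /descent_ofH /= flatmap_seq1.
apply: fs_trans _ (tensB_tensBk_post e.2 (fs_sym (descent_of_act p.1 e.1))).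
by rewrite -map_comp; apply: fs_refl.
Qed.

Lemma descent_ofH_rho x y (m : M x y) :
  tensBk_eq (flatmap (@descent_ofH x y) (rho m))
            (flatmap (fun r => [seq (act M r.1 p.1, p.2) | p <- transl_Delta A_galois r.2])
                     (rho m)).
Proof.
apply: fs_trans (_ : tensBk_eq _ (canM_inv12 A_galois
                       [seq (q.1, (q.2, p.2)) | p <- rho m, q <- rho p.1])) _.
  apply: fs_of_eq; rewrite /canM_inv12 (allpairs_flatmap (fun p q => (q.1, (q.2, p.2)))).
  rewrite flatmapA; apply: eq_flatmap => r.
  rewrite /descent_ofH /descent_of /canM_inv flatmap_map map_flatmap.
  by apply: eq_flatmap => w /=; rewrite -map_comp.
apply: fs_trans (canM_inv12_eq A_galois (rho_coassoc m)) _; apply: fs_of_eq.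
rewrite /canM_inv12 (allpairs_flatmap (fun p q => (p.1, (q.1, q.2)))) flatmapA.
apply: eq_flatmap => r; rewrite /transl_Delta flatmap_map map_flatmap.
by apply: eq_flatmap => d /=; rewrite /lmul -!map_comp.
Qed.

Lemma descent_of_coassoc x y (m : M x y) :
  tensBMAA_eq [seq (q.1, (q.2, p.2)) | p <- sigma m, q <- sigma p.1]
              [seq (p.1, (idm A x, p.2)) | p <- sigma m].
Proof.
apply: (can23_inj A_galois).
apply: fs_trans (can23_descent_of2 m) _; apply: fs_trans (descent_ofH_rho m) _.
rewrite (_ : can23 _ = flatmap (fun r => [seq (act M r.1 p.1, p.2)
                                | p <- transl_crho A_galois r.2]) (rho m)).
  by apply: fs_flatmap => r; apply/lmul_tensBk_eq/transl_Delta_crho.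
rewrite /can23 flatmap_map /descent_of /canM_inv flatmapA; apply: eq_flatmap => r /=.
rewrite /transl_crho /lmul flatmap_map map_flatmap; apply: eq_flatmap => u /=.
by rewrite -!map_comp; apply: eq_map => e /=; rewrite comp1l.
Qed.

Lemma descent_of_descent : is_descent descent_of.
Proof.
split=> [x y m m'|x y c m|x y z m a|x y m|x y m].
- exact: descent_ofD.
- exact: descent_ofZ.
- exact: descent_of_act.
- exact: descent_of_coassoc.
- exact: descent_of_unit.
Qed.

End HopfModuleToDescent.

Lemma hopfmod_morph_descent_morph (k : comPzRingType) (X : Type) (H : semiHopf k X)
    (A : comodcat H) (M M' : rmod A) (sigma : forall x y, M x y -> seq (M x x * A x y))
    (sigma' : forall x y, M' x y -> seq (M' x x * A x y)) (f : forall x y, M x y -> M' x y) :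
  is_galois A ->
  hopfmod_morph (rho_of sigma) (rho_of sigma') f -> descent_morph sigma sigma' f.
Proof.
move=> A_galois [f_morph f_rho]; split=> // x y m; apply: (canM_inj A_galois).
by have := f_rho x y m; rewrite -canM_morph.
Qed.

Close Scope ring_scope.
Unset Implicit Arguments.

Theorem theorem3p9 (k : comPzRingType) (X : Type) (H : semiHopf k X) (A : comodcat H) :
  (forall (M : rmod A) (sigma : forall x y, M x y -> seq (M x x * A x y)),
      is_descent sigma -> is_hopfmod (rho_of sigma)) /\
  (forall (M M' : rmod A) (sigma : forall x y, M x y -> seq (M x x * A x y))
          (sigma' : forall x y, M' x y -> seq (M' x x * A x y))
          (f : forall x y, M x y -> M' x y),
      is_descent sigma -> is_descent sigma' -> descent_morph sigma sigma' f ->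
      hopfmod_morph (rho_of sigma) (rho_of sigma') f) /\
  (is_hopf_cat H -> is_galois A ->
    [/\ forall (M : rmod A) (rho : forall x y, M x y -> seq (M x y * H x y)),
          is_hopfmod rho ->
          exists sigma : forall x y, M x y -> seq (M x x * A x y),
            is_descent sigma /\
            (forall x y (m : M x y), tensk_eq (rho_of sigma m) (rho x y m)),
        forall (M : rmod A) (sigma sigma' : forall x y, M x y -> seq (M x x * A x y)),
          is_descent sigma -> is_descent sigma' ->
          (forall x y (m : M x y), tensk_eq (rho_of sigma m) (rho_of sigma' m)) ->
          (forall x y (m : M x y), tensBMA_eq (sigma x y m) (sigma' x y m)) &
        forall (M M' : rmod A) (sigma : forall x y, M x y -> seq (M x x * A x y))
          (sigma' : forall x y, M' x y -> seq (M' x x * A x y))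
          (f : forall x y, M x y -> M' x y),
          is_descent sigma -> is_descent sigma' ->
          hopfmod_morph (rho_of sigma) (rho_of sigma') f ->
          descent_morph sigma sigma' f]).
Proof.
split; first by move=> M sigma; apply: rho_of_hopfmod.
split; first by move=> M M' sigma sigma' f _ _; apply: descent_morph_hopfmod_morph.
move=> _ A_galois; split.
- move=> M rho rho_hopfmod; exists (descent_of A_galois rho).
  split; first exact: (descent_of_descent A_galois rho_hopfmod).
  by move=> x y m; apply: rho_of_descent_of.
- move=> M sigma sigma' _ _ rho_eq x y m; exact: (canM_inj A_galois (rho_eq x y m)).
- by move=> M M' sigma sigma' f _ _; apply: hopfmod_morph_descent_morph.
Qed.
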